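(* Let $P$ be a finite graded poset with unique minimal element $\hat0$ and rank function $\rho$ with $\rho(\hat0)=0$, and let $\theta$ be an equivalence relation on $P$ such that $\rho$ is constant on $\theta$-classes. Equip $P/\theta$ with the transitive closure $\preceq$ of the quotient relation $\leqslant_\theta$ (a graded partial order with rank $[p]\mapsto\rho(p)$ and unique minimal element $[\hat0]$). Suppose that for every $p\in P$, $$\sum_{[q]\preceq[p]}\ \sum_{r\in[q]}\mu_P(r)=\begin{cases}1 & \text{if } [p]=[\hat0],\\ 0 & \text{otherwise}.\end{cases}$$ Then $\mu_{P/\theta}([p])=\sum_{q\in[p]}\mu_P(q)$ for all $p\in P$, and $\chi_{P/\theta}(t)=\chi_P(t)$.
   Context: For a finite poset $P$ with unique minimal element $\hat0$, the Möbius function $\mu_P\colon P\to\mathbb Z$ is defined recursively by $\sum_{p\leqslant q}\mu_P(p)=\delta_{\hat0,q}$ for all $q\in P$. A poset is graded with rank function $\rho$ if $p<q\Rightarrow\rho(p)<\rho(q)$ and $p\lessdot q\Rightarrow\rho(q)=\rho(p)+1$; for graded $P$ with $\rho(\hat0)=0$, $\rho(P)$ denotes the maximal value of $\rho$, and the characteristic polynomial is $\chi_P(t)=\sum_{p\in P}\mu_P(p)t^{\rho(P)-\rho(p)}$. The quotient relation is $[p]\leqslant_\theta[q]$ iff there exist $p'\in[p]$, $q'\in[q]$ with $p'\leqslant q'$. *)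

From mathcomp Require Import all_boot all_order all_algebra.
Set Implicit Arguments. Unset Strict Implicit. Unset Printing Implicit Defensive.
Import GRing.Theory Num.Theory.
Local Open Scope ring_scope.

Section Posets.
Variable U : finType.
Implicit Types (le : rel U).

Definition is_partial_order le :=
  [/\ reflexive le, antisymmetric le & transitive le].

Definition covers le (p q : U) : bool :=
  [&& le p q, p != q & [forall r, (le p r && le r q) ==> (r == p) || (r == q)]].

Definition is_rank_function le (z : U) (rho : U -> nat) :=
  [/\ rho z = 0%N,
      forall p q, le p q -> p != q -> (rho p < rho q)%N &
      forall p q, covers le p q -> rho q = (rho p).+1].

(* Moebius function, defined by the recursion
   mu(z) = 1, mu(q) = - sum_{p < q} mu(p); the fuel #|U| suffices. *)
Fixpoint mobius_fuel le (z : U) (n : nat) (p : U) : int :=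
  match n with
  | 0 => 0
  | n'.+1 => if p == z then 1
             else - \sum_(r | le r p && (r != p)) mobius_fuel le z n' r
  end.

Definition mobius le (z : U) (p : U) : int := mobius_fuel le z #|U| p.

Definition poset_rank (rho : U -> nat) : nat := \max_(p : U) rho p.

Definition poset_charpoly le (z : U) (rho : U -> nat) : {poly int} :=
  \sum_(p : U) (mobius le z p)%:P * 'X^(poset_rank rho - rho p).
End Posets.

Section Quotient.
Variable T : finType.
Variable theta : rel T.

Definition classes : {set {set T}} := [set [set q | theta p q] | p in [set: T]].

Definition qtype := {A : {set T} | A \in classes}.

Definition cls (p : T) : qtype :=
  exist (fun A => A \in classes) [set q | theta p q] (imset_f _ (in_setT p)).

Definition qrel (le : rel T) : rel qtype :=
  fun A B => [exists p in val A, exists q in val B, le p q].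

(* its transitive closure (qrel is reflexive, so this is connect) *)
Definition qle (le : rel T) : rel qtype := connect (qrel le).

(* rank on the quotient: [p] |-> rho p (well defined when rho is constant
   on classes) *)
Definition qrank (rho : T -> nat) (A : qtype) : nat := \max_(p in val A) rho p.
End Quotient.

From mathcomp Require Import all_boot all_order all_algebra.
From mathcomp Require Import zify.
Set Implicit Arguments. Unset Strict Implicit. Unset Printing Implicit Defensive.
Import GRing.Theory Num.Theory.
Local Open Scope ring_scope.

(* The Möbius function of a finite poset with least element z is the unique
   g with  sum_(r <= p) g r = [p == z]  for all p  (mobius_unique); the
   recursion fuel #|U| of [mobius] is enough because the strict down-set of
   an element has fewer than #|U| elements and shrinks along the order.
   For the quotient P/theta we first show that qle is a partial order with
   least element [z]: it is a reflexive transitive closure, and antisymmetry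
   follows because each quotient step either stays in a class or strictly
   raises the (well-defined) class rank (qle_rank).  The hypothesis of the
   theorem then says exactly that  A |-> sum_(r in A) mu_P r  satisfies the
   defining identity of mu_{P/theta}, so the two coincide.  Finally both
   posets have the same maximal rank, and partitioning the sum defining
   chi_P along the classes of theta gives chi_{P/theta} = chi_P. *)

Section MobiusUniqueness.
Variables (U : finType) (le : rel U) (z : U).
Hypotheses (le_refl : reflexive le) (le_trans : transitive le)
           (le_anti : antisymmetric le) (le_z : forall p, le z p).

(* The strict down-set of p, whose size bounds the recursion depth at p. *)
Definition strict_down (p : U) : {set U} := [set r | le r p && (r != p)].

Lemma strict_down_lt (r p : U) :
  le r p -> r != p -> (#|strict_down r| < #|strict_down p|)%N.
Proof.
move=> le_rp neq_rp; apply: proper_card; apply/properP; split.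
  apply/subsetP=> s; rewrite !inE => /andP[le_sr neq_sr].
  rewrite (le_trans le_sr le_rp) /=; apply: contraNneq neq_rp => eq_sp.
  by apply/eqP/le_anti; rewrite le_rp -eq_sp le_sr.
by exists r; rewrite !inE ?le_rp ?neq_rp ?eqxx ?andbF.
Qed.

(* A strict down-set misses its own top element, so it is small. *)
Lemma strict_down_small (p : U) : (#|strict_down p| < #|U|)%N.
Proof.
rewrite -cardsT; apply: proper_card; apply/properP; split; first exact: subsetT.
by exists p; rewrite !inE ?eqxx ?andbF.
Qed.

Lemma mobius_unique (g : U -> int) :
  (forall p, \sum_(r | le r p) g r = (p == z)%:R) ->
  forall p, mobius le z p = g p.
Proof.
move=> g_sum p; rewrite /mobius; move: (strict_down_small p).
elim: #|U| p => [//|n IH] p small_p /=.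
have [->|neq_pz] := eqVneq p z.
  have := g_sum z; rewrite eqxx (eq_bigl (pred1 z)) ?big_pred1_eq // => r /=.
  by apply/idP/eqP=> [le_rz|->]; [apply: le_anti; rewrite le_rz le_z|].
have := g_sum p; rewrite (negbTE neq_pz) (bigD1 p) //= => /eqP.
rewrite addr_eq0 => /eqP ->; congr (- _); apply: eq_bigr => r /andP[le_rp neq_rp].
by apply: IH; have := strict_down_lt le_rp neq_rp; lia.
Qed.

End MobiusUniqueness.

Section Classes.
Variables (T : finType) (theta : rel T).
Hypothesis theta_eq : equivalence_rel theta.

Lemma theta_refl p : theta p p. Proof. exact: (theta_eq p p p).1. Qed.

Lemma mem_cls p q : (q \in val (cls theta p)) = theta p q.
Proof. by rewrite inE. Qed.

Lemma cls_eq p q : theta p q -> cls theta p = cls theta q.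
Proof. by move=> h; apply: val_inj; apply/setP=> x; rewrite !inE (theta_eq p q x).2. Qed.

Lemma cls_surj (A : qtype theta) : exists p, A = cls theta p.
Proof. by case: A => S SA; case/imsetP: (SA) => p _ eS; exists p; apply: val_inj. Qed.

Lemma in_clsE (A : qtype theta) r : (r \in val A) = (cls theta r == A).
Proof.
have [p ->] := cls_surj A; rewrite mem_cls.
by apply/idP/eqP=> [/cls_eq ->|eq_rp]; rewrite // -mem_cls -eq_rp mem_cls theta_refl.
Qed.

Lemma cls_self p : p \in val (cls theta p).
Proof. by rewrite mem_cls theta_refl. Qed.

End Classes.

Section GradedQuotient.
Variables (T : finType) (theta : rel T) (rho : T -> nat).
Hypothesis theta_eq : equivalence_rel theta.
Hypothesis rho_cls : forall p q, theta p q -> rho p = rho q.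

Lemma qrank_in (A : qtype theta) r : r \in val A -> qrank rho A = rho r.
Proof.
rewrite in_clsE // => /eqP <-; apply/eqP; rewrite eqn_leq; apply/andP; split.
  by apply/bigmax_leqP=> q; rewrite mem_cls => /rho_cls ->.
by apply: (leq_bigmax_cond (F := rho)); exact: cls_self.
Qed.

Lemma poset_rank_quotient :
  poset_rank (qrank (theta := theta) rho) = poset_rank rho.
Proof.
apply/eqP; rewrite eqn_leq; apply/andP; split; apply/bigmax_leqP.
  move=> A _; have [p ->] := cls_surj A.
  rewrite (qrank_in (cls_self theta_eq p)); exact: (leq_bigmax_cond (F := rho)).
move=> p _; rewrite -(qrank_in (cls_self theta_eq p)).
exact: (leq_bigmax_cond (F := qrank rho)).
Qed.

Variable le : rel T.
Hypothesis rho_mono : forall p q, le p q -> p != q -> (rho p < rho q)%N.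

Lemma qrel_rank (A B : qtype theta) :
  qrel le A B -> (A == B) || (qrank rho A < qrank rho B)%N.
Proof.
case/existsP=> p /andP[pA /existsP[q /andP[qB le_pq]]].
rewrite (qrank_in pA) (qrank_in qB).
have [eq_pq|neq_pq] := eqVneq p q; last by rewrite rho_mono ?orbT.
rewrite !in_clsE // -eq_pq in pA qB.
by rewrite -(eqP pA) -(eqP qB) eqxx.
Qed.

Lemma qle_rank (A B : qtype theta) :
  qle le A B -> (A == B) || (qrank rho A < qrank rho B)%N.
Proof.
case/connectP=> s; elim: s A => [|C s IH] A /=; first by move=> _ ->; rewrite eqxx.
case/andP=> rel_AC path_C eq_B; have := IH C path_C eq_B; have := qrel_rank rel_AC.
case/orP=> [/eqP ->//|lt_AC]; case/orP=> [/eqP <-|lt_CB]; first by rewrite lt_AC orbT.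
by rewrite (ltn_trans lt_AC lt_CB) orbT.
Qed.

Lemma qle_anti : antisymmetric (qle (theta := theta) le).
Proof.
move=> A B /andP[le_AB le_BA].
have := qle_rank le_AB; have := qle_rank le_BA.
case/orP=> [/eqP ->//|lt_BA]; case/orP=> [/eqP ->//|lt_AB].
by have := ltn_trans lt_AB lt_BA; rewrite ltnn.
Qed.

Lemma qle_bottom z : (forall p, le z p) -> forall A, qle le (cls theta z) A.
Proof.
move=> le_z A; have [p ->] := cls_surj A; apply: connect1.
apply/existsP; exists z; rewrite cls_self //=.
by apply/existsP; exists p; rewrite cls_self ?le_z.
Qed.

End GradedQuotient.

Theorem mainTheorem15 (T : finType) (le : rel T) (z : T) (rho : T -> nat)
    (theta : rel T) :
  is_partial_order le ->
  (forall p, le z p) ->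
  is_rank_function le z rho ->
  equivalence_rel theta ->
  (forall p q, theta p q -> rho p = rho q) ->
  (forall p : T,
     \sum_(A : qtype theta | qle le A (cls theta p))
        \sum_(r in val A) mobius le z r
     = (cls theta p == cls theta z)%:R) ->
  (forall p : T,
     mobius (qle le) (cls theta z) (cls theta p)
     = \sum_(q in val (cls theta p)) mobius le z q)
  /\ poset_charpoly (qle le) (cls theta z) (qrank rho) = poset_charpoly le z rho.
Proof.
move=> _ le_z [_ rho_mono _] theta_eq rho_cls hyp.
have mobius_quot : forall A : qtype theta,
    mobius (qle le) (cls theta z) A = \sum_(r in val A) mobius le z r.
  apply: mobius_unique.
  - exact: connect0.
  - exact: connect_trans.
  - by move=> A B; apply: (qle_anti theta_eq rho_cls rho_mono).
  - exact: qle_bottom.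
  - by move=> B; have [p ->] := cls_surj B; exact: hyp.
split=> [p|]; first exact: mobius_quot.
rewrite /poset_charpoly poset_rank_quotient //.
rewrite (partition_big (cls theta) xpredT) //=; apply: eq_bigr => A _.
rewrite mobius_quot raddf_sum mulr_suml; apply: eq_big => [r|r r_A].
  by rewrite in_clsE.
by rewrite (qrank_in theta_eq rho_cls r_A).
Qed.
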